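(* Let $M$ be a left $H$-module with action $\triangleright$, and let $T\in\mathrm{End}_k(M)$ be a linear projection ($T^2=T$) such that $T_h\circ T=T\circ T_h$ for all $h\in H$, where $T_h(m)=h_{(1)}\triangleright T(S(h_{(2)})\triangleright m)$. Then the linear map $\pi:H\to\mathrm{End}_k(T(M))$, $\pi(h)(m)=T(h\triangleright m)$ for $m\in T(M)$, is a partial representation of $H$. Thus $(T(M),\pi)$ is a partial $H$-module.
   Context: Throughout, $k$ is a field and $H$ is a Hopf algebra over $k$ with bijective antipode $S$ and Sweedler notation $\Delta(h)=h_{(1)}\otimes h_{(2)}$. A partial representation of $H$ on a vector space $V$ is a linear map $\pi:H\to\mathrm{End}_k(V)$ satisfying, for all $h,k\in H$: - $\pi(1_H)=\mathrm{id}_V$; - $\pi(h)\pi(k_{(1)})\pi(S(k_{(2)}))=\pi(hk_{(1)})\pi(S(k_{(2)}))$; - $\pi(h_{(1)})\pi(S(h_{(2)}))\pi(k)=\pi(h_{(1)})\pi(S(h_{(2)})k)$; - $\pi(h)\pi(S(k_{(1)}))\pi(k_{(2)})=\pi(hS(k_{(1)}))\pi(k_{(2)})$; - $\pi(S(h_{(1)}))\pi(h_{(2)})\pi(k)=\pi(S(h_{(1)}))\pi(h_{(2)}k)$. *)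

From HB Require Import structures.
From mathcomp Require Import all_boot all_order all_algebra.
Set Implicit Arguments. Unset Strict Implicit. Unset Printing Implicit Defensive.
Import GRing.Theory.
Local Open Scope ring_scope.

Definition bilin (k : fieldType) (A B : lmodType k) (V : lmodType k)
    (f : A -> B -> V) : Prop :=
  (forall (a : k) x y z, f (a *: x + y) z = a *: f x z + f y z) /\
  (forall (a : k) x y z, f x (a *: y + z) = a *: f x y + f x z).

Definition trilin (k : fieldType) (A : lmodType k) (V : lmodType k)
    (f : A -> A -> A -> V) : Prop :=
  (forall (a : k) x y z w, f (a *: x + y) z w = a *: f x z w + f y z w) /\
  (forall (a : k) x y z w, f z (a *: x + y) w = a *: f z x w + f z y w) /\
  (forall (a : k) x y z w, f z w (a *: x + y) = a *: f z w x + f z w y).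

(* The coproduct Delta(h) in H (x) H is represented by a finite list
   [cop h] of pairs (h1, h2) with Delta(h) = sum h1 (x) h2 (Sweedler).
   Equalities in H (x) H (resp. H (x) H (x) H) are expressed via the
   universal property: they are tested against all bilinear (resp.
   trilinear) maps into all k-vector spaces V. *)
Record hopf_axioms (k : fieldType) (H : algType k)
    (cop : H -> seq (H * H)) (eps : H -> k) (S : H -> H) : Prop := {
  cop_linear : forall (V : lmodType k) (f : H -> H -> V), bilin f ->
    forall (a : k) x y,
      \sum_(p <- cop (a *: x + y)) f p.1 p.2 =
      a *: (\sum_(p <- cop x) f p.1 p.2) + \sum_(p <- cop y) f p.1 p.2;
  cop_coassoc : forall (V : lmodType k) (f : H -> H -> H -> V), trilin f ->
    forall h,
      \sum_(p <- cop h) \sum_(q <- cop p.1) f q.1 q.2 p.2 =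
      \sum_(p <- cop h) \sum_(q <- cop p.2) f p.1 q.1 q.2;
  cop_mul : forall (V : lmodType k) (f : H -> H -> V), bilin f ->
    forall x y,
      \sum_(p <- cop (x * y)) f p.1 p.2 =
      \sum_(p <- cop x) \sum_(q <- cop y) f (p.1 * q.1) (p.2 * q.2);
  cop_one : forall (V : lmodType k) (f : H -> H -> V), bilin f ->
      \sum_(p <- cop 1) f p.1 p.2 = f 1 1;
  eps_linear : forall (a : k) x y, eps (a *: x + y) = a * eps x + eps y;
  eps_mul : forall x y, eps (x * y) = eps x * eps y;
  eps_one : eps 1 = 1;
  counit_l : forall h, \sum_(p <- cop h) eps p.1 *: p.2 = h;
  counit_r : forall h, \sum_(p <- cop h) eps p.2 *: p.1 = h;
  S_linear : forall (a : k) x y, S (a *: x + y) = a *: S x + S y;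
  antipode_l : forall h, \sum_(p <- cop h) S p.1 * p.2 = eps h *: 1;
  antipode_r : forall h, \sum_(p <- cop h) p.1 * S p.2 = eps h *: 1;
  S_bij : bijective S
}.

Record lmod_action (k : fieldType) (H : algType k) (M : lmodType k)
    (act : H -> M -> M) : Prop := {
  act_linl : forall (a : k) x y m, act (a *: x + y) m = a *: act x m + act y m;
  act_linr : forall (a : k) x m n, act x (a *: m + n) = a *: act x m + act x n;
  act_one : forall m, act 1 m = m;
  act_mul : forall x y m, act (x * y) m = act x (act y m)
}.

Definition Tconj (k : fieldType) (H : algType k) (M : lmodType k)
    (cop : H -> seq (H * H)) (S : H -> H) (act : H -> M -> M)
    (T : M -> M) (h : H) (m : M) : M :=
  \sum_(p <- cop h) act p.1 (T (act (S p.2) m)).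

(* A partial representation of H on the subspace W = {v | P v} of V,
   given by pi : H -> (V -> V), where only the restrictions of pi h to W
   matter (so pi h is regarded as an element of End_k(W)). *)
Definition partial_rep_on (k : fieldType) (H : algType k) (V : lmodType k)
    (cop : H -> seq (H * H)) (S : H -> H)
    (P : V -> Prop) (pi : H -> V -> V) : Prop :=
  (forall h v, P v -> P (pi h v)) /\
  (forall h (a : k) v w, P v -> P w -> pi h (a *: v + w) = a *: pi h v + pi h w) /\
  (forall (a : k) x y v, P v -> pi (a *: x + y) v = a *: pi x v + pi y v) /\
  (forall v, P v -> pi 1 v = v) /\
  (forall h g v, P v ->
     \sum_(p <- cop g) pi h (pi p.1 (pi (S p.2) v)) =
     \sum_(p <- cop g) pi (h * p.1) (pi (S p.2) v)) /\
  (forall h g v, P v ->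
     \sum_(p <- cop h) pi p.1 (pi (S p.2) (pi g v)) =
     \sum_(p <- cop h) pi p.1 (pi (S p.2 * g) v)) /\
  (forall h g v, P v ->
     \sum_(p <- cop g) pi h (pi (S p.1) (pi p.2 v)) =
     \sum_(p <- cop g) pi (h * S p.1) (pi p.2 v)) /\
  (forall h g v, P v ->
     \sum_(p <- cop h) pi (S p.1) (pi p.2 (pi g v)) =
     \sum_(p <- cop h) pi (S p.1) (pi (p.2 * g) v)).

(* Write [T'_h m = S(h_(1)) |> T(h_(2) |> m)].  The antipode identities give
   [T(S(h) |> y) = S(h_(1)) |> T_(h_(2))(y)] and [T_(h_(1))(h_(2) |> y) = h |> T(y)];
   together with coassociativity and [T_h o T = T o T_h] they show that [T'_g]
   commutes with [T] as well.  For any operator [U m = sum_i a_i |> T(b_i |> m)]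
   commuting with the idempotent [T], the vectors [U(T m)] lie in [T(M)] and
   [T(U(T m)) = T(U m)]; for [U = T_g] and [U = T'_g] these are exactly the four
   axioms of a partial representation for [pi(h) = T o (h |>)]. *)
From HB Require Import structures.
From mathcomp Require Import all_boot all_order all_algebra.
Set Implicit Arguments. Unset Strict Implicit. Unset Printing Implicit Defensive.
Import GRing.Theory.
Local Open Scope ring_scope.

Section LinearFunctions.
Variables (k : fieldType) (U V : lmodType k) (f : U -> V).
Hypothesis f_lin : linear f.

Let fL : {linear U -> V} := HB.pack f (GRing.isLinear.Build _ _ _ _ f f_lin).

Lemma linear_sum_of (I : Type) (r : seq I) (F : I -> U) :
  f (\sum_(i <- r) F i) = \sum_(i <- r) f (F i).
Proof. exact: (linear_sum fL). Qed.

Lemma linearZ_of a u : f (a *: u) = a *: f u.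
Proof. exact: (linearZ_LR fL). Qed.

End LinearFunctions.

Section Sandwich.
Variables (k : fieldType) (H : algType k) (M : lmodType k).
Variables (act : H -> M -> M) (T : M -> M).
Hypotheses (hM : lmod_action act) (T_lin : linear T) (T_idem : forall m, T (T m) = T m).

Lemma act_linear h : linear (act h).
Proof. by move=> a m n; rewrite (act_linr hM). Qed.

Lemma act_linear_l m : linear (act^~ m).
Proof. by move=> a x y; rewrite (act_linl hM). Qed.

Definition sandwich (I : Type) (s : seq I) (a b : I -> H) (m : M) : M :=
  \sum_(i <- s) act (a i) (T (act (b i) m)).

Variables (I : Type) (s : seq I) (a b : I -> H).
Hypothesis sandwich_comm_T : forall m, sandwich s a b (T m) = T (sandwich s a b m).

Lemma T_sandwich_T m : T (sandwich s a b (T m)) = sandwich s a b (T m).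
Proof. by rewrite sandwich_comm_T T_idem. Qed.

Lemma sum_T_act_sandwich_l h m :
  \sum_(i <- s) T (act h (T (act (a i) (T (act (b i) (T m)))))) =
  \sum_(i <- s) T (act (h * a i) (T (act (b i) (T m)))).
Proof.
rewrite -(linear_sum_of T_lin) -(linear_sum_of (act_linear h)) -(linear_sum_of T_lin).
rewrite -/(sandwich s a b (T m)) T_sandwich_T /sandwich.
rewrite (linear_sum_of (act_linear h)) (linear_sum_of T_lin).
by apply: eq_bigr => i _; rewrite (act_mul hM).
Qed.

Lemma sum_T_act_sandwich_r g m :
  \sum_(i <- s) T (act (a i) (T (act (b i) (T (act g m))))) =
  \sum_(i <- s) T (act (a i) (T (act (b i * g) m))).
Proof.
rewrite -(linear_sum_of T_lin) -/(sandwich s a b _) sandwich_comm_T T_idem.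
rewrite (linear_sum_of T_lin).
by apply: eq_bigr => i _; rewrite (act_mul hM).
Qed.

End Sandwich.

Section HopfModule.
Variables (k : fieldType) (H : algType k).
Variables (cop : H -> seq (H * H)) (eps : H -> k) (S : H -> H).
Hypothesis hH : hopf_axioms cop eps S.
Variables (M : lmodType k) (act : H -> M -> M) (T : M -> M).
Hypotheses (hM : lmod_action act) (T_lin : linear T).

Local Notation Tc := (Tconj cop S act T).

Lemma antipode_linear : linear S.
Proof. exact: S_linear hH. Qed.

Lemma act_antipode_l x m : act (\sum_(q <- cop x) S q.1 * q.2) m = eps x *: m.
Proof. by rewrite (antipode_l hH) (linearZ_of (act_linear_l hM m)) (act_one hM). Qed.

Lemma Tconj_linear h : linear (Tc h).
Proof.
move=> a m n; rewrite /Tconj scaler_sumr -big_split /=; apply: eq_bigr => p _.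
by rewrite (act_linr hM) T_lin (act_linr hM).
Qed.

Lemma Tconj_linear_l m : linear (Tc^~ m).
Proof.
have bilin_m : bilin (fun u v => act u (T (act (S v) m))).
  split=> c u v w; first by rewrite (act_linl hM).
  by rewrite (S_linear hH) (act_linl hM) T_lin (act_linr hM).
move=> a x y; exact: (cop_linear hH bilin_m).
Qed.

Lemma T_act_antipode h y :
  T (act (S h) y) = \sum_(p <- cop h) act (S p.1) (Tc p.2 y).
Proof.
have -> : \sum_(p <- cop h) act (S p.1) (Tc p.2 y) =
          \sum_(p <- cop h) \sum_(q <- cop p.1) act (S q.1 * q.2) (T (act (S p.2) y)).
  have tri : trilin (fun u v w => act (S u * v) (T (act (S w) y))).
    split; [|split] => c u v w z /=.
    - by rewrite (S_linear hH) mulrDl -scalerAl (act_linl hM).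
    - by rewrite mulrDr -scalerAr (act_linl hM).
    - by rewrite (S_linear hH) (act_linl hM) T_lin (act_linr hM).
  rewrite (cop_coassoc hH tri); apply: eq_bigr => p _.
  rewrite (linear_sum_of (act_linear hM _)).
  by apply: eq_bigr => q _; rewrite (act_mul hM).
under eq_bigr => p _ do rewrite -(linear_sum_of (act_linear_l hM _)) act_antipode_l.
rewrite -{1}(counit_l hH h) (linear_sum_of antipode_linear).
rewrite (linear_sum_of (act_linear_l hM _)) (linear_sum_of T_lin).
by apply: eq_bigr => p _; rewrite (linearZ_of antipode_linear)
  (linearZ_of (act_linear_l hM _)) (linearZ_of T_lin).
Qed.

Lemma sum_Tconj_act h y : \sum_(p <- cop h) Tc p.1 (act p.2 y) = act h (T y).
Proof.
have -> : \sum_(p <- cop h) Tc p.1 (act p.2 y) =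
          \sum_(p <- cop h) \sum_(q <- cop p.2) act p.1 (T (act (S q.1 * q.2) y)).
  have tri : trilin (fun u v w => act u (T (act (S v * w) y))).
    split; [|split] => c u v w z /=.
    - by rewrite (act_linl hM).
    - by rewrite (S_linear hH) mulrDl -scalerAl (act_linl hM) T_lin (act_linr hM).
    - by rewrite mulrDr -scalerAr (act_linl hM) T_lin (act_linr hM).
  rewrite -(cop_coassoc hH tri).
  by apply: eq_bigr => p _; apply: eq_bigr => q _; rewrite (act_mul hM).
under eq_bigr => p _ do rewrite -(linear_sum_of (act_linear hM _))
  -(linear_sum_of T_lin) -(linear_sum_of (act_linear_l hM _)) act_antipode_l.
rewrite -[in RHS](counit_r hH h) (linear_sum_of (act_linear_l hM _)).
by apply: eq_bigr => p _; rewrite (linearZ_of T_lin) (linearZ_of (act_linear hM _))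
  (linearZ_of (act_linear_l hM _)).
Qed.

Hypothesis T_comm : forall h m, Tc h (T m) = T (Tc h m).

Lemma sandwich_antipode_T g m :
  sandwich act T (cop g) (fun p => S p.1) (fun p => p.2) (T m) =
  T (sandwich act T (cop g) (fun p => S p.1) (fun p => p.2) m).
Proof.
rewrite /sandwich (linear_sum_of T_lin).
under [RHS]eq_bigr => p _ do rewrite T_act_antipode.
have -> : \sum_(p <- cop g) \sum_(q <- cop p.1) act (S q.1) (Tc q.2 (T (act p.2 m))) =
          \sum_(p <- cop g) \sum_(q <- cop p.2) act (S p.1) (T (Tc q.1 (act q.2 m))).
  have tri : trilin (fun u v w => act (S u) (T (Tc v (act w m)))).
    split; [|split] => c u v w z /=.
    - by rewrite (S_linear hH) (act_linl hM).
    - by rewrite Tconj_linear_l T_lin (act_linr hM).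
    - by rewrite (act_linl hM) Tconj_linear T_lin (act_linr hM).
  rewrite -(cop_coassoc hH tri).
  by apply: eq_bigr => p _; apply: eq_bigr => q _; rewrite T_comm.
apply: eq_bigr => p _.
by rewrite -(sum_Tconj_act p.2 m) (linear_sum_of T_lin) (linear_sum_of (act_linear hM _)).
Qed.

End HopfModule.

Theorem mainTheorem6 (k : fieldType) (H : algType k)
    (cop : H -> seq (H * H)) (eps : H -> k) (S : H -> H)
    (hH : hopf_axioms cop eps S)
    (M : lmodType k) (act : H -> M -> M) (hM : lmod_action act)
    (T : M -> M)
    (T_lin : forall (a : k) m n, T (a *: m + n) = a *: T m + T n)
    (T_idem : forall m, T (T m) = T m)
    (T_comm : forall h m, Tconj cop S act T h (T m) = T (Tconj cop S act T h m)) :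
  partial_rep_on cop S (fun m : M => exists m0 : M, m = T m0)
    (fun h m => T (act h m)).
Proof.
have Tanti_T g := sandwich_antipode_T hH hM T_lin T_comm g.
split; first by move=> h v _; exists (act h v).
split; first by move=> h a v w _ _; rewrite (act_linr hM) T_lin.
split; first by move=> a x y v _; rewrite (act_linl hM) T_lin.
split; first by move=> v [m ->]; rewrite (act_one hM) T_idem.
split.
  move=> h g v [m ->].
  exact: (sum_T_act_sandwich_l (b := fun p => S p.2) hM T_lin T_idem (T_comm g)).
split.
  move=> h g v _.
  exact: (sum_T_act_sandwich_r (b := fun p => S p.2) hM T_lin T_idem (T_comm h)).
split.
  move=> h g v [m ->].
  exact: (sum_T_act_sandwich_l hM T_lin T_idem (Tanti_T g)).
move=> h g v _.
exact: (sum_T_act_sandwich_r hM T_lin T_idem (Tanti_T h)).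
Qed.
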